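(* Let $n\ge1$, $\Gamma\ge1$, $\varphi:(0,1)\to[0,\infty)$, $\alpha\in(0,1)$, and let $x_0>0$ be such that $\sigma_n^2(x_0)>0$. Then under $H_0(\Gamma)$, $$\mathbb{P}\big(\exists x\in(0,1): T_n(x)\ge f_{\alpha,n}(x)\,\big|\,\mathcal{F}\big)\le\alpha .$$
   Context: Paired observational study: there are $n$ pairs; in pair $i$, units $j=1,2$ have control potential outcome $R_{Cij}$, treated potential outcome $R_{Tij}$ and treatment indicator $Z_{ij}\in\{0,1\}$. Throughout, everything is conditional on the event that exactly one unit per pair is treated. $\mathcal{F}$ is the $\sigma$-field generated by all potential outcomes. Observed outcomes are $R^{obs}_{ij}=Z_{ij}R_{Tij}+(1-Z_{ij})R_{Cij}$ and $Y_i=(Z_{i1}-Z_{i2})(R^{obs}_{i1}-R^{obs}_{i2})$. Standing assumption: $\mathbb{P}(Y_i=0)=0$ for all $i$. For $\Gamma\ge1$, the sensitivity null $H_0(\Gamma)$ asserts: $R_{Tij}=R_{Cij}$ for all $i,j$; and conditional on $\mathcal{F}$, assignments are independent across pairs and for every $i$, $\frac1\Gamma\le \frac{\mathbb{P}(Z_{i1}=1\mid\mathcal{F})/\mathbb{P}(Z_{i1}=0\mid\mathcal{F})}{\mathbb{P}(Z_{i2}=1\mid\mathcal{F})/\mathbb{P}(Z_{i2}=0\mid\mathcal{F})}\le\Gamma$. Let $Y_{(1)},\dots,Y_{(n)}$ be the $Y_i$ ordered so that $|Y_{(1)}|\le\dots\le|Y_{(n)}|$, $c_i=\varphi(i/(n+1))$,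 $T_n(x)=0$ for $x<1/(n+1)$ and $T_n(x)=\sum_{i=\lceil (1-x)(n+1)\rceil}^{n} c_i\mathbf{1}\{Y_{(i)}>0\}$ for $x\ge1/(n+1)$. Let $\rho_\Gamma=\Gamma/(1+\Gamma)$, $\sigma_n^2(x)=\rho_\Gamma(1-\rho_\Gamma)\sum_{i=\lceil (1-x)(n+1)\rceil}^n c_i^2$, $\lambda_n=\sqrt{2\log(1/\alpha)/\sigma_n^2(x_0)}$, and $$f_{\alpha,n}(x)=\frac1{\lambda_n}\Big[\log\frac1\alpha+\sum_{i=\lceil (1-x)(n+1)\rceil}^n\log\big(1+\rho_\Gamma(e^{c_i\lambda_n}-1)\big)\Big].$$ *)

From HB Require Import structures.
From mathcomp Require Import all_boot all_order fingroup perm all_algebra.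
From mathcomp Require Import boolp reals sequences exp.
Set Implicit Arguments. Unset Strict Implicit. Unset Printing Implicit Defensive.
Import Order.TTheory GRing.Theory Num.Theory.
Local Open Scope ring_scope.

Section PairedSensitivity.
Variable R : realType.

(* A treatment assignment for n pairs with exactly one treated unit per pair:
   z i = true  <->  Z_{i1} = 1, Z_{i2} = 0 ;  z i = false <-> Z_{i1} = 0, Z_{i2} = 1.
   Units are indexed by j : 'I_2 (j = 0 is unit 1, j = 1 is unit 2). *)
Definition assignment (n : nat) := {ffun 'I_n -> bool}.

Definition Zind (n : nat) (z : assignment n) (i : 'I_n) (j : 'I_2) : R :=
  if j == ord0 then (z i)%:R else (~~ z i)%:R.

Definition robs (n : nat) (rT rC : 'I_n -> 'I_2 -> R) (z : assignment n)
    (i : 'I_n) (j : 'I_2) : R :=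
  Zind z i j * rT i j + (1 - Zind z i j) * rC i j.

Definition Yobs (n : nat) (rT rC : 'I_n -> 'I_2 -> R) (z : assignment n)
    (i : 'I_n) : R :=
  (Zind z i ord0 - Zind z i ord_max) *
  (robs rT rC z i ord0 - robs rT rC z i ord_max).

(* conditional law of the assignment given F: independent across pairs,
   P(Z_{i1} = 1 | F) = p i *)
Definition weight (n : nat) (p : 'I_n -> R) (z : assignment n) : R :=
  \prod_(i < n) (if z i then p i else 1 - p i).

(* scores c_i = phi(i/(n+1)), i = 1..n ; the ordinal k : 'I_n stands for i = k+1 *)
Definition cw (phi : R -> R) (n : nat) (k : 'I_n) : R :=
  phi (k.+1%:R / n.+1%:R).

Definition inTail (n : nat) (x : R) (k : 'I_n) : bool :=
  (Num.ceil ((1 - x) * n.+1%:R) <= (k.+1)%:Z)%R.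

(* T_n(x), where Yord k = Y_(k+1) *)
Definition Tn (phi : R -> R) (n : nat) (Yord : 'I_n -> R) (x : R) : R :=
  if x < 1 / n.+1%:R then 0
  else \sum_(k < n | inTail x k) cw phi k * ((0 < Yord k)%R)%:R.

Definition rhoG (G : R) : R := G / (1 + G).

Definition sigma2 (phi : R -> R) (G : R) (n : nat) (x : R) : R :=
  rhoG G * (1 - rhoG G) * \sum_(k < n | inTail x k) cw phi k ^+ 2.

Definition lambdan (phi : R -> R) (G : R) (n : nat) (alpha x0 : R) : R :=
  Num.sqrt (2 * ln (1 / alpha) / sigma2 phi G n x0).

Definition falpha (phi : R -> R) (G : R) (n : nat) (alpha x0 x : R) : R :=
  let l := lambdan phi G n alpha x0 in
  1 / l * (ln (1 / alpha) +
    \sum_(k < n | inTail x k) ln (1 + rhoG G * (expR (cw phi k * l) - 1))).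

(* sensitivity null H_0(Gamma), conditional on F and on one treated unit per pair:
   no treatment effect, and the conditional probability that unit 1 of pair i is
   treated lies in [1/(1+Gamma), Gamma/(1+Gamma)]. *)
Definition H0 (n : nat) (G : R) (rT rC : 'I_n -> 'I_2 -> R) (p : 'I_n -> R) : Prop :=
  (forall i j, rT i j = rC i j) /\
  (forall i, 1 / (1 + G) <= p i <= G / (1 + G)).

End PairedSensitivity.

From HB Require Import structures.
From mathcomp Require Import all_boot all_order fingroup perm all_algebra.
From mathcomp Require Import boolp reals sequences exp.
From mathcomp Require Import ring lra zify.
Import Order.TTheory GRing.Theory Num.Theory.
Set Implicit Arguments. Unset Strict Implicit. Unset Printing Implicit Defensive.
Local Open Scope ring_scope.

(* Under H0(Gamma), Y_i = +/-(R_Ci1 - R_Ci2), so the events Y_i > 0 are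
   independent with probabilities q_i in [1 - rho, rho].  For the Bernoulli
   tilts g_k(win) = exp(lambda c_k win - log(1 + rho (e^(lambda c_k) - 1))),
   each of mean at most 1, the tail products prod_(k >= m) g_k, built from the
   largest |Y| downwards, form a nonnegative supermartingale started at 1.
   The summation ranges of T_n(x) and f_(alpha,n)(x) are such tails, and
   T_n(x) >= f_(alpha,n)(x) says that the corresponding tail product reaches
   1/alpha; Ville's maximal inequality bounds the probability of this by alpha. *)

Section ProductBernoulli.
Variable R : realType.

Definition extend_ffun n (f : {ffun 'I_n -> bool}) (b : bool) : {ffun 'I_n.+1 -> bool} :=
  [ffun i => if unlift ord_max i is Some j then f j else b].

Lemma extend_ffun_max n (f : {ffun 'I_n -> bool}) b : extend_ffun f b ord_max = b.
Proof. by rewrite ffunE unlift_none. Qed.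

Lemma extend_ffun_widen n (f : {ffun 'I_n -> bool}) b j :
  extend_ffun f b (widen_ord (leqnSn n) j) = f j.
Proof.
have -> : widen_ord (leqnSn n) j = lift ord_max j.
  by apply: val_inj; rewrite /= /bump leqNgt ltn_ord.
by rewrite ffunE liftK.
Qed.

Lemma sum_extend_ffun n (F : {ffun 'I_n.+1 -> bool} -> R) :
  \sum_z F z = \sum_(b : bool) \sum_(f : {ffun 'I_n -> bool}) F (extend_ffun f b).
Proof.
rewrite pair_big (reindex (fun bf : bool * _ => extend_ffun bf.2 bf.1)) //=.
exists (fun z : {ffun 'I_n.+1 -> bool} => (z ord_max, [ffun j => z (lift ord_max j)])).
  move=> [b f] _ /=; rewrite extend_ffun_max; congr pair.
  by apply/ffunP => j; rewrite !ffunE liftK.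
by move=> z _; apply/ffunP => i; rewrite ffunE; case: unliftP => [j ->|->]; rewrite ?ffunE.
Qed.

Lemma weight_extend n (q : 'I_n.+1 -> R) (f : {ffun 'I_n -> bool}) b :
  weight q (extend_ffun f b) =
  weight (fun j => q (widen_ord (leqnSn n) j)) f *
    (if b then q ord_max else 1 - q ord_max).
Proof.
rewrite /weight big_ord_recr /= extend_ffun_max; congr (_ * _).
by apply: eq_bigr => j _; rewrite extend_ffun_widen.
Qed.

Lemma weight_ge0 n (q : 'I_n -> R) (w : {ffun 'I_n -> bool}) :
  (forall k, 0 <= q k <= 1) -> 0 <= weight q w.
Proof.
move=> q01; apply: prodr_ge0 => k _.
by have /andP[? ?] := q01 k; case: (w k); lra.
Qed.

Lemma sum_weight n (q : 'I_n -> R) : \sum_w weight q w = 1.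
Proof.
rewrite /weight -(bigA_distr_bigA (fun k (b : bool) => if b then q k else 1 - q k)).
by apply: big1 => k _; rewrite big_bool /=; lra.
Qed.

Lemma sum_weight_indicator_le1 n (q : 'I_n -> R) (P : pred {ffun 'I_n -> bool}) :
  (forall k, 0 <= q k <= 1) -> \sum_w weight q w * (P w)%:R <= 1.
Proof.
move=> q01; rewrite -[X in _ <= X](sum_weight q); apply: ler_sum => w _.
by have := weight_ge0 w q01; case: (P w) => /=; lra.
Qed.

Lemma sum_weight_perm n (q : 'I_n -> R) (s : 'S_n) (F : {ffun 'I_n -> bool} -> R) :
  \sum_z weight q z * F [ffun k => z (s k)] =
  \sum_w weight (fun k => q (s k)) w * F w.
Proof.
pose h (z : {ffun 'I_n -> bool}) := [ffun k => z (s k)].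
have h_bij : bijective h.
  exists (fun w : {ffun 'I_n -> bool} => [ffun i => w (s^-1%g i)]).
    by move=> z; apply/ffunP => i; rewrite !ffunE permKV.
  by move=> w; apply/ffunP => k; rewrite !ffunE permK.
rewrite [RHS](reindex h) /=; last exact: onW_bij.
apply: eq_bigr => z _; congr (_ * _).
by rewrite /weight (reindex_inj (@perm_inj _ s)); apply: eq_bigr => k _; rewrite ffunE.
Qed.

End ProductBernoulli.

Section Ville.
Variable R : realType.

Definition tail_hit n (t y : R) (g : 'I_n -> bool -> R) (w : {ffun 'I_n -> bool}) : bool :=
  [exists m : 'I_n.+1, t <= y * \prod_(k < n | (m <= k)%N) g k (w k)].

Lemma tail_hit_extend n (t y : R) (g : 'I_n.+1 -> bool -> R) f b : y < t ->
  tail_hit t y g (extend_ffun f b) ->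
  tail_hit t (y * g ord_max b) (fun k => g (widen_ord (leqnSn n) k)) f.
Proof.
move=> y_lt_t /existsP[m]; rewrite big_mkcond big_ord_recr /= extend_ffun_max.
have [m_le_n|n_lt_m] := leqP m n; last first.
  rewrite big1 => [|k _]; first by rewrite !mulr1 leNgt y_lt_t.
  by rewrite leqNgt (ltn_trans (ltn_ord k) n_lt_m).
move=> hit; apply/existsP; exists (inord m); rewrite inordK ?ltnS //.
rewrite [_ * g ord_max b]mulrC mulrA in hit; rewrite big_mkcond; apply: le_trans hit _.
by under eq_bigr do rewrite extend_ffun_widen.
Qed.

Lemma ville_inequality n (q : 'I_n -> R) (g : 'I_n -> bool -> R) (y t : R) :
  (forall k, 0 <= q k <= 1) -> (forall k b, 0 <= g k b) ->
  (forall k, q k * g k true + (1 - q k) * g k false <= 1) -> 0 <= y -> 0 < t ->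
  \sum_w weight q w * (tail_hit t y g w)%:R <= y / t.
Proof.
move=> + + + + t_gt0; elim: n q g y => [|n IH] q g y q01 g_ge0 g_mean y_ge0;
  (have [t_le_y|y_lt_t] := lerP t y;
   first by apply: le_trans (sum_weight_indicator_le1 _ q01) _; rewrite ler_pdivlMr // mul1r).
  rewrite big1 => [|w _]; first by rewrite divr_ge0 // ltW.
  by rewrite [tail_hit _ _ _ _]negbTE ?mulr0 //; apply/existsP => -[m];
     rewrite big_ord0 mulr1 leNgt y_lt_t.
pose qn (b : bool) := if b then q ord_max else 1 - q ord_max.
have branch b : \sum_(f : {ffun 'I_n -> bool})
    weight q (extend_ffun f b) * (tail_hit t y g (extend_ffun f b))%:R
    <= qn b * (y * g ord_max b / t).
  have qn_ge0 : 0 <= qn b by have /andP[? ?] := q01 ord_max; case: b @qn => /=; lra.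
  have IHb := IH (fun k => q (widen_ord (leqnSn n) k)) (fun k => g (widen_ord (leqnSn n) k))
    (y * g ord_max b) (fun k => q01 _) (fun k => g_ge0 _) (fun k => g_mean _)
    (mulr_ge0 y_ge0 (g_ge0 _ _)).
  apply: le_trans (ler_wpM2l qn_ge0 IHb).
  rewrite mulr_sumr; apply: ler_sum => f _; rewrite weight_extend -/(qn b) mulrAC mulrC.
  apply: ler_wpM2l => //; apply: ler_wpM2l; first by apply: weight_ge0 => k; apply: q01.
  by case: (tail_hit _ _ _ (extend_ffun f b)) (@tail_hit_extend _ t y g f b y_lt_t) => // ->.
rewrite sum_extend_ffun big_bool; apply: le_trans (lerD (branch true) (branch false)) _.
have -> : qn true * (y * g ord_max true / t) + qn false * (y * g ord_max false / t) =
    y / t * (q ord_max * g ord_max true + (1 - q ord_max) * g ord_max false).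
  by rewrite /qn; ring.
by rewrite -[X in _ <= X]mulr1 ler_wpM2l // divr_ge0 // ltW.
Qed.

End Ville.

Section BernoulliTilt.
Variable R : realType.
Implicit Types (rho a q : R) (win : bool).

Definition bern_cgf rho a : R := ln (1 + rho * (expR a - 1)).

Definition bern_tilt rho a win : R := expR (a * win%:R - bern_cgf rho a).

Lemma expR_ge1 a : 0 <= a -> 1 <= expR a.
Proof. by move=> a_ge0; apply: le_trans (expR_ge1Dx a); rewrite lerDl. Qed.

Lemma bern_mgf_ge1 rho a : 0 <= rho -> 0 <= a -> 1 <= 1 + rho * (expR a - 1).
Proof. by move=> rho_ge0 a_ge0; rewrite lerDl mulr_ge0 // subr_ge0 expR_ge1. Qed.

Lemma bern_cgf_ge0 rho a : 0 <= rho -> 0 <= a -> 0 <= bern_cgf rho a.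
Proof. by move=> rho_ge0 a_ge0; apply/ln_ge0/bern_mgf_ge1. Qed.

Lemma bern_tilt_mean_le1 rho a q win1 win0 :
  0 <= rho -> 0 <= a -> 1 - rho <= q <= rho -> ~~ (win1 && win0) ->
  q * bern_tilt rho a win1 + (1 - q) * bern_tilt rho a win0 <= 1.
Proof.
move=> rho_ge0 a_ge0 /andP[q_ge q_le] not_both.
have mgf_ge1 := bern_mgf_ge1 rho_ge0 a_ge0.
have tiltE win : bern_tilt rho a win = (if win then expR a else 1) / (1 + rho * (expR a - 1)).
  rewrite /bern_tilt expRB lnK ?posrE ?(lt_le_trans ltr01) //.
  by case: win; rewrite ?mulr1 ?mulr0 ?expR0.
rewrite !tiltE !mulrA -mulrDl ler_pdivrMr ?(lt_le_trans ltr01) // mul1r.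
have E_ge1 := expR_ge1 a_ge0.
set E := expR a; move: not_both; case: win1; case: win0 => //= _.
- have : 0 <= (rho - q) * (E - 1) by apply: mulr_ge0; rewrite subr_ge0.
  by lra.
- have : 0 <= (q - (1 - rho)) * (E - 1) by apply: mulr_ge0; rewrite subr_ge0.
  by lra.
- have : 0 <= rho * (E - 1) by rewrite mulr_ge0 // subr_ge0.
  by lra.
Qed.

Lemma prod_bern_tilt (I : Type) (r : seq I) (P : pred I) rho (a : I -> R) (win : I -> bool) :
  \prod_(i <- r | P i) bern_tilt rho (a i) (win i) =
  expR (\sum_(i <- r | P i) a i * (win i)%:R - \sum_(i <- r | P i) bern_cgf rho (a i)).
Proof. by rewrite -sumrB expR_sum. Qed.

End BernoulliTilt.

Section Statistic.
Variable R : realType.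

Lemma rhoG_ge0 (G : R) : 0 <= G -> 0 <= rhoG G.
Proof. by move=> G_ge0; rewrite divr_ge0 // addr_ge0. Qed.

Lemma subr_1_rhoG (G : R) : 0 <= G -> 1 - rhoG G = 1 / (1 + G).
Proof. by move=> G_ge0; rewrite /rhoG; field; rewrite gt_eqF // ltr_pwDl. Qed.

Lemma rhoG_le1 (G : R) : 0 <= G -> rhoG G <= 1.
Proof. by move=> G_ge0; rewrite -subr_ge0 subr_1_rhoG // divr_ge0 // addr_ge0. Qed.

Lemma cw_ge0 (phi : R -> R) n (k : 'I_n) :
  (forall x, 0 < x < 1 -> 0 <= phi x) -> 0 <= cw phi k.
Proof.
by move=> phi_ge0; apply: phi_ge0; rewrite divr_gt0 //= ltr_pdivrMr // mul1r ltr_nat ltnS.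
Qed.

Lemma lambdan_gt0 (phi : R -> R) (G alpha x0 : R) n :
  0 < alpha < 1 -> 0 < sigma2 phi G n x0 -> 0 < lambdan phi G n alpha x0.
Proof.
move=> /andP[alpha_gt0 alpha_lt1] sigma2_gt0.
by rewrite sqrtr_gt0 divr_gt0 // mulr_gt0 // ln_gt0 // div1r invf_gt1.
Qed.

Lemma Yobs_no_effect n (rC : 'I_n -> 'I_2 -> R) (z : assignment n) i :
  Yobs rC rC z i = if z i then rC i ord0 - rC i ord_max else - (rC i ord0 - rC i ord_max).
Proof. by rewrite /Yobs /robs /Zind /=; case: (z i) => /=; ring. Qed.

Lemma inTail_tail_start n (x : R) : x < 1 ->
  exists m : 'I_n.+1, inTail x =1 fun k : 'I_n => (m <= k)%N.
Proof.
move=> x_lt1; set C := Num.ceil ((1 - x) * n.+1%:R).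
have C_gt0 : (0 < C)%R by rewrite ceil_gt0 mulr_gt0 // subr_gt0.
exists (inord (minn `|C - 1|%N n)) => k; rewrite /inTail -/C inordK ?ltnS ?geq_minr //.
by have k_lt_n := ltn_ord k; apply/idP/idP; lia.
Qed.

Lemma falpha_le_Tn_tail_hit n (Gamma alpha x0 x : R) (phi : R -> R) (Y : 'I_n -> R)
    (g : 'I_n -> bool -> R) (w : {ffun 'I_n -> bool}) :
  0 <= rhoG Gamma -> 0 < alpha < 1 -> 0 < lambdan phi Gamma n alpha x0 ->
  (forall x, 0 < x < 1 -> 0 <= phi x) -> x < 1 ->
  (forall k, g k (w k) =
     bern_tilt (rhoG Gamma) (cw phi k * lambdan phi Gamma n alpha x0) (0 < Y k)) ->
  falpha phi Gamma n alpha x0 x <= Tn phi Y x -> tail_hit alpha^-1 1 g w.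
Proof.
set rho := rhoG Gamma; set lam := lambdan _ _ _ _ _.
move=> rho_ge0 /andP[alpha_gt0 alpha_lt1] lam_gt0 phi_ge0 x_lt1 gE.
have L_gt0 : 0 < ln (1 / alpha) by rewrite ln_gt0 // div1r invf_gt1.
have cgf_ge0 (P : pred 'I_n) : 0 <= \sum_(k < n | P k) bern_cgf rho (cw phi k * lam).
  by apply: sumr_ge0 => k _; rewrite bern_cgf_ge0 // mulr_ge0 ?cw_ge0 // ltW.
rewrite /falpha /Tn -/rho -/lam; case: ltP => [_|_] hit.
  have : 0 < 1 / lam * (ln (1 / alpha) +
           \sum_(k < n | inTail x k) bern_cgf rho (cw phi k * lam)).
    by rewrite mulr_gt0 ?divr_gt0 // ltr_wpDr.
  by rewrite ltNge hit.
have [m m_tail] := inTail_tail_start n x_lt1.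
apply/existsP; exists m; rewrite mul1r (eq_bigr _ (fun k _ => gE k)) prod_bern_tilt.
rewrite -[alpha^-1]div1r -[1 / alpha]lnK ?posrE ?divr_gt0 // ler_expR lerBrDr.
rewrite !(eq_bigl _ _ m_tail) in hit.
rewrite [X in _ <= X](eq_bigr (fun k => cw phi k * (0 < Y k)%R%:R * lam)) => [|k _];
  last by rewrite mulrAC.
by rewrite -mulr_suml -ler_pdivrMr // mulrC -div1r.
Qed.

End Statistic.

Theorem theorem1 (R : realType) (n : nat) (Gamma alpha x0 : R) (phi : R -> R)
    (rT rC : 'I_n -> 'I_2 -> R) (p : 'I_n -> R) (s : 'S_n) :
  (0 < n)%N ->
  1 <= Gamma ->
  (forall x : R, 0 < x < 1 -> 0 <= phi x) ->
  0 < alpha < 1 ->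
  0 < x0 ->
  0 < sigma2 phi Gamma n x0 ->
  H0 Gamma rT rC p ->
  (* standing assumption P(Y_i = 0 | F) = 0 *)
  (forall i : 'I_n,
     \sum_(z : assignment n | Yobs rT rC z i == 0) weight p z = 0) ->
  (* Y_(k+1) = Y_(s k), ordered by increasing absolute value (F-measurable order) *)
  (forall (z : assignment n) (k l : 'I_n), (k <= l)%N ->
     `|Yobs rT rC z (s k)| <= `|Yobs rT rC z (s l)|) ->
  \sum_(z : assignment n |
          `[< exists x : R, 0 < x < 1 /\
               falpha phi Gamma n alpha x0 x <=
               Tn phi (fun k => Yobs rT rC z (s k)) x >])
     weight p z <= alpha.
Proof.
move=> _ Gamma_ge1 phi_ge0 alpha01 _ sigma2_gt0 [no_effect p_range] _ _.
have {no_effect} -> : rT = rC by apply/funext => i; apply/funext => j; exact: no_effect.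
have Gamma_ge0 : 0 <= Gamma := le_trans ler01 Gamma_ge1.
have rho_ge0 := rhoG_ge0 Gamma_ge0.
have p_rho i : 1 - rhoG Gamma <= p i <= rhoG Gamma by rewrite subr_1_rhoG //; exact: p_range.
have p01 i : 0 <= p i <= 1 by have := p_rho i; have := rhoG_le1 Gamma_ge0; lra.
have lam_gt0 := lambdan_gt0 alpha01 sigma2_gt0.
pose d i := rC i ord0 - rC i ord_max.
pose g k (b : bool) := bern_tilt (rhoG Gamma) (cw phi k * lambdan phi Gamma n alpha x0)
                                 (0 < if b then d (s k) else - d (s k)).
have g_mean k : p (s k) * g k true + (1 - p (s k)) * g k false <= 1.
  apply: bern_tilt_mean_le1 => //; first by rewrite mulr_ge0 ?cw_ge0 // ltW.
  by rewrite negb_and -!leNgt oppr_le0 le_total.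
have g_ge0 k b : 0 <= g k b by exact: expR_ge0.
have alphaV_gt0 : 0 < alpha^-1 by case/andP: alpha01 => *; rewrite invr_gt0.
have := ville_inequality (fun k => p01 (s k)) g_ge0 g_mean ler01 alphaV_gt0.
rewrite div1r invrK -sum_weight_perm; apply: le_trans.
rewrite big_mkcond /=; apply: ler_sum => z _.
case: asboolP => [[x [/andP[_ x_lt1] hit]]|_]; last by rewrite mulr_ge0 ?weight_ge0.
rewrite (falpha_le_Tn_tail_hit (w := [ffun k => z (s k)]) (g := g) rho_ge0 alpha01 lam_gt0
  phi_ge0 x_lt1 _ hit) ?mulr1 // => k.
by rewrite /g ffunE Yobs_no_effect.
Qed.
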